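(* Let $n\ge 1$ with $n\not\equiv 1 \pmod 3$, and consider peg solitaire on the triangular board $T_n$. If a sequence of jumps on $T_n$ ends in a board position with exactly one peg, then none of the board positions occurring in this sequence (including the initial one) has $120^\circ$ rotational symmetry, i.e., no such position $P$ satisfies $P(r(h))=P(h)$ for every hole $h$, where $r(x,y)=(y-x,\,n-1-x)$.
   Context: The triangular board $T_n$ is the set of holes with integer skew coordinates $(x,y)$ satisfying $0\le x\le y\le n-1$. A board position $P$ assigns to each hole $h$ either a peg or no peg. A jump takes a peg at hole $p$, jumps it over a peg at an adjacent hole $p+d$ into an empty hole $p+2d$, where $d$ is one of the six directions $(\pm1,0)$, $(0,\pm1)$, $(1,1)$, $(-1,-1)$ and all three holes lie in $T_n$; the jumped-over peg is removed. The map $r(x,y)=(y-x,n-1-x)$ is the counterclockwise rotation of $T_n$ by $120^\circ$ in skew coordinates; a position has $120^\circ$ rotational symmetry if it is invariant under $r$. *)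

(* holes are integer skew coordinates (x,y) in Z*Z. *)
From Stdlib Require Import ZArith List.
Open Scope Z_scope.

Definition in_board (n : Z) (x y : Z) : Prop := 0 <= x /\ x <= y /\ y <= n - 1.

(* A board position: true = peg, false = no peg.  Only values at holes of
   T_n are meaningful. *)
Definition position := Z -> Z -> bool.

Definition is_dir (dx dy : Z) : Prop :=
  (dx = 1 /\ dy = 0) \/ (dx = -1 /\ dy = 0) \/ (dx = 0 /\ dy = 1) \/
  (dx = 0 /\ dy = -1) \/ (dx = 1 /\ dy = 1) \/ (dx = -1 /\ dy = -1).

Definition jump (n : Z) (P Q : position) : Prop :=
  exists px py dx dy : Z,
    is_dir dx dy /\
    in_board n px py /\ in_board n (px + dx) (py + dy) /\
    in_board n (px + 2 * dx) (py + 2 * dy) /\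
    P px py = true /\ P (px + dx) (py + dy) = true /\
    P (px + 2 * dx) (py + 2 * dy) = false /\
    Q px py = false /\ Q (px + dx) (py + dy) = false /\
    Q (px + 2 * dx) (py + 2 * dy) = true /\
    (forall x y, in_board n x y ->
       (x, y) <> (px, py) -> (x, y) <> (px + dx, py + dy) ->
       (x, y) <> (px + 2 * dx, py + 2 * dy) -> Q x y = P x y).

Fixpoint jump_seq (n : Z) (P : position) (Ps : list position) : Prop :=
  match Ps with
  | nil => True
  | Q :: Qs => jump n P Q /\ jump_seq n Q Qs
  end.

Definition final_pos (P : position) (Ps : list position) : position :=
  last Ps P.

Definition one_peg (n : Z) (P : position) : Prop :=
  exists hx hy, in_board n hx hy /\ P hx hy = true /\
    forall x y, in_board n x y -> P x y = true -> x = hx /\ y = hy.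

Definition rot (n x y : Z) : Z * Z := (y - x, n - 1 - x).

Definition rot_sym (n : Z) (P : position) : Prop :=
  forall x y, in_board n x y -> P (fst (rot n x y)) (snd (rot n x y)) = P x y.

From Stdlib Require Import ZArith List Lia Permutation FinFun Bool.
Open Scope Z_scope.

(* Colour the hole (x, y) by (x + y) mod 3.  The three holes of a jump have
   pairwise distinct colours, so a jump changes each of the three colour counts
   by one and the parity of the sum of any two counts is invariant.  A single
   peg of colour c makes the counts of colours c and c + 1 have odd sum.  The
   rotation r shifts colours by n - 1, which generates Z/3 when n mod 3 <> 1, so
   a symmetric position has three equal counts and all pairwise sums even. *)

Definition zsum {A : Type} (L : list A) (f : A -> Z) : Z :=
  fold_right (fun a s => f a + s) 0 L.

Lemma zsum_ext {A : Type} (L : list A) (f g : A -> Z) :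
  (forall a, In a L -> f a = g a) -> zsum L f = zsum L g.
Proof.
  induction L as [|b L IH]; intros Hfg; simpl; [reflexivity|].
  rewrite Hfg, IH; auto using in_eq, in_cons.
Qed.

Lemma zsum_eq0 {A : Type} (L : list A) (f : A -> Z) :
  (forall a, In a L -> f a = 0) -> zsum L f = 0.
Proof.
  induction L as [|b L IH]; intros Hf; simpl; [reflexivity|].
  rewrite Hf, IH; auto using in_eq, in_cons.
Qed.

Lemma zsum_sub {A : Type} (L : list A) (f g : A -> Z) :
  zsum L (fun a => f a - g a) = zsum L f - zsum L g.
Proof. induction L; simpl; lia. Qed.

Lemma zsum_map {A B : Type} (r : B -> A) (L : list B) (f : A -> Z) :
  zsum (map r L) f = zsum L (fun b => f (r b)).
Proof. induction L; simpl; lia. Qed.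

Lemma zsum_perm {A : Type} (L L' : list A) (f : A -> Z) :
  Permutation L L' -> zsum L f = zsum L' f.
Proof. induction 1; simpl; lia. Qed.

Section Support.

Variable A : Type.
Hypothesis eq_dec : forall a b : A, {a = b} + {a <> b}.

Lemma zsum_split_point (L : list A) (f : A -> Z) (s : A) :
  NoDup L -> In s L ->
  zsum L f = f s + zsum L (fun a => if eq_dec a s then 0 else f a).
Proof.
  induction L as [|b L IH]; intros Hnd Hs; [destruct Hs|].
  inversion Hnd as [|? ? Hb HL]; subst; simpl.
  destruct (eq_dec b s) as [<-|Hbs].
  - f_equal. rewrite Z.add_0_l. apply zsum_ext. intros a Ha.
    destruct (eq_dec a b) as [->|]; [contradiction|reflexivity].
  - destruct Hs as [->|Hs]; [contradiction|]. rewrite (IH HL Hs). lia.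
Qed.

Lemma zsum_support (L S : list A) (f : A -> Z) :
  NoDup L -> NoDup S -> incl S L ->
  (forall a, In a L -> ~ In a S -> f a = 0) ->
  zsum L f = zsum S f.
Proof.
  revert f. induction S as [|s S IH]; intros f HL HS HSL Hf; simpl.
  - apply zsum_eq0. auto.
  - inversion HS as [|? ? Hs HS']; subst.
    rewrite (zsum_split_point L f s HL (HSL s (in_eq s S))).
    rewrite IH; [| assumption | assumption | apply (incl_cons_inv HSL) |].
    + f_equal. apply zsum_ext. intros a Ha.
      destruct (eq_dec a s) as [->|]; [contradiction|reflexivity].
    + intros a Ha HaS. destruct (eq_dec a s) as [|Has]; [reflexivity|].
      apply Hf; [assumption|]. intros [->|]; contradiction.
Qed.

End Support.

Lemma NoDup_list_prod {A B : Type} (l : list A) (l' : list B) :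
  NoDup l -> NoDup l' -> NoDup (list_prod l l').
Proof.
  induction l as [|a l IH]; simpl; intros Hl Hl'; [constructor|].
  inversion Hl; subst. apply NoDup_app; auto.
  - apply Injective_map_NoDup; [intros x y E; injection E|]; auto.
  - intros [x y] Hx Hy. apply in_map_iff in Hx as [z [E _]].
    injection E as <- _. apply in_prod_iff in Hy. tauto.
Qed.

Definition hole_eq_dec (h h' : Z * Z) : {h = h'} + {h <> h'}.
Proof. decide equality; apply Z.eq_dec. Defined.

Definition range (n : Z) : list Z := map Z.of_nat (seq 0 (Z.to_nat n)).

Lemma in_range n z : In z (range n) <-> 0 <= z < n.
Proof.
  unfold range. rewrite in_map_iff. split.
  - intros [m [<- Hm]]. apply in_seq in Hm. lia.
  - intros Hz. exists (Z.to_nat z). rewrite in_seq. lia.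
Qed.

Lemma NoDup_range n : NoDup (range n).
Proof. apply Injective_map_NoDup; [intros a b; lia | apply seq_NoDup]. Qed.

Definition board (n : Z) : list (Z * Z) :=
  filter (fun h => (0 <=? fst h) && (fst h <=? snd h) && (snd h <=? n - 1))
         (list_prod (range n) (range n)).

Lemma in_board_iff n x y : In (x, y) (board n) <-> in_board n x y.
Proof.
  unfold board, in_board. rewrite filter_In, in_prod_iff, !in_range; simpl.
  rewrite !andb_true_iff, !Z.leb_le. lia.
Qed.

Lemma NoDup_board n : NoDup (board n).
Proof. apply NoDup_filter, NoDup_list_prod; apply NoDup_range. Qed.

Definition color (x y : Z) : Z := (x + y) mod 3.

Definition peg_of_color (P : position) (k : Z) (h : Z * Z) : Z :=
  Z.b2z (P (fst h) (snd h) && (color (fst h) (snd h) =? k)).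

Definition pegs_of_color (n : Z) (P : position) (k : Z) : Z :=
  zsum (board n) (peg_of_color P k).

Lemma color_jump_line px py dx dy k : is_dir dx dy -> 0 <= k < 3 ->
  Z.b2z (color px py =? k) + Z.b2z (color (px + dx) (py + dy) =? k)
  + Z.b2z (color (px + 2 * dx) (py + 2 * dy) =? k) = 1.
Proof.
  unfold is_dir, color. intros Hd Hk.
  destruct Hd as [[-> ->]|[[-> ->]|[[-> ->]|[[-> ->]|[[-> ->]|[-> ->]]]]]];
  repeat match goal with |- context [?a =? ?b] => destruct (Z.eqb_spec a b) end;
  simpl; Z.to_euclidean_division_equations; lia.
Qed.

Lemma jump_odd_pegs_of_color n P Q k : jump n P Q -> 0 <= k < 3 ->
  Z.odd (pegs_of_color n Q k) = negb (Z.odd (pegs_of_color n P k)).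
Proof.
  intros [px [py [dx [dy [Hd [B0 [B1 [B2 [P0 [P1 [P2 [Q0 [Q1 [Q2 Hframe]]]]]]]]]]]]]] Hk.
  set (line := (px, py) :: (px + dx, py + dy) :: (px + 2 * dx, py + 2 * dy) :: nil).
  assert (Hline : NoDup line).
  { assert (dx <> 0 \/ dy <> 0) by (unfold is_dir in Hd; lia).
    unfold line; repeat apply NoDup_cons; try apply NoDup_nil; cbn [In];
      intros Hin; repeat destruct Hin as [Hin|Hin]; try contradiction;
      apply pair_equal_spec in Hin; lia. }
  assert (Hdiff : pegs_of_color n Q k - pegs_of_color n P k
                  = zsum line (fun h => peg_of_color Q k h - peg_of_color P k h)).
  { unfold pegs_of_color. rewrite <- zsum_sub.
    apply zsum_support; auto using NoDup_board, hole_eq_dec.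
    - intros h Hh; repeat destruct Hh as [<-|Hh]; try contradiction;
        apply in_board_iff; assumption.
    - intros [x y] Hxy Hout. unfold peg_of_color; simpl.
      rewrite Hframe; [lia | apply in_board_iff; assumption | ..];
        intros E; apply Hout; rewrite E; unfold line; cbn [In]; tauto. }
  pose proof (color_jump_line px py dx dy k Hd Hk) as Hcol.
  unfold line, zsum, peg_of_color in Hdiff; cbn [fold_right fst snd] in Hdiff.
  rewrite P0, P1, P2, Q0, Q1, Q2 in Hdiff; cbn [andb Z.b2z] in Hdiff.
  replace (pegs_of_color n Q k) with
    (pegs_of_color n P k + 2 * Z.b2z (color (px + 2 * dx) (py + 2 * dy) =? k) + (- 1))
    by lia.
  rewrite Z.odd_add, Z.odd_add_mul_2. simpl. apply xorb_true_r.
Qed.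

Lemma final_pos_cons P R Rs : final_pos P (R :: Rs) = final_pos R Rs.
Proof.
  unfold final_pos. revert P R. induction Rs as [|R' Rs IH]; intros P R.
  - reflexivity.
  - change (last (R' :: Rs) P = last (R' :: Rs) R).
    rewrite (IH P R'), (IH R R'). reflexivity.
Qed.

Lemma jump_seq_invariant {B : Type} (inv : position -> B) n P Ps :
  (forall P Q, jump n P Q -> inv Q = inv P) -> jump_seq n P Ps ->
  forall Q, In Q (P :: Ps) -> inv Q = inv (final_pos P Ps).
Proof.
  intros Hjump. revert P. induction Ps as [|R Rs IH]; intros P Hseq Q HQ.
  - destruct HQ as [<-|[]]. reflexivity.
  - destruct Hseq as [HPR Hseq]. rewrite final_pos_cons.
    destruct HQ as [<-|HQ].
    + rewrite <- (IH R Hseq R (in_eq R Rs)). symmetry. apply Hjump. assumption.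
    + apply IH; assumption.
Qed.

Lemma jump_seq_xorb_odd_pegs_of_color n P Ps i j :
  0 <= i < 3 -> 0 <= j < 3 -> jump_seq n P Ps ->
  forall Q, In Q (P :: Ps) ->
  xorb (Z.odd (pegs_of_color n Q i)) (Z.odd (pegs_of_color n Q j))
  = xorb (Z.odd (pegs_of_color n (final_pos P Ps) i))
         (Z.odd (pegs_of_color n (final_pos P Ps) j)).
Proof.
  intros Hi Hj. apply (jump_seq_invariant
    (fun Q => xorb (Z.odd (pegs_of_color n Q i)) (Z.odd (pegs_of_color n Q j)))).
  intros Q Q' HQQ'. rewrite !(jump_odd_pegs_of_color n Q Q') by assumption.
  apply xorb_negb_negb.
Qed.

Lemma one_peg_pegs_of_color n F : one_peg n F ->
  exists c, 0 <= c < 3 /\ forall k, pegs_of_color n F k = Z.b2z (c =? k).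
Proof.
  intros [hx [hy [Hb [Hpeg Honly]]]]. exists (color hx hy). split.
  { unfold color. apply Z.mod_pos_bound. lia. }
  intros k. unfold pegs_of_color.
  rewrite (zsum_support _ hole_eq_dec _ ((hx, hy) :: nil)).
  - unfold zsum, peg_of_color; simpl. rewrite Hpeg. simpl. lia.
  - apply NoDup_board.
  - repeat constructor. simpl; tauto.
  - intros h [<-|[]]. apply in_board_iff. assumption.
  - intros [x y] Hxy Hout. unfold peg_of_color; simpl.
    destruct (F x y) eqn:Fxy; [|reflexivity].
    apply in_board_iff in Hxy. destruct (Honly x y Hxy Fxy) as [-> ->].
    exfalso. apply Hout. left. reflexivity.
Qed.

Definition rot_hole (n : Z) (h : Z * Z) : Z * Z := rot n (fst h) (snd h).

Lemma board_rot_perm n : Permutation (board n) (map (rot_hole n) (board n)).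
Proof.
  apply NoDup_Permutation; [apply NoDup_board | |].
  - apply Injective_map_NoDup; [|apply NoDup_board].
    intros [x y] [x' y'] E. unfold rot_hole, rot in E; simpl in E.
    apply pair_equal_spec in E as [E1 E2].
    apply pair_equal_spec. lia.
  - intros [x y]. rewrite in_map_iff. split.
    + intros Hxy. apply in_board_iff in Hxy.
      (* r has order 3, so r o r inverts it. *)
      exists (rot_hole n (rot_hole n (x, y))). unfold rot_hole, rot; simpl.
      split; [f_equal; lia | apply in_board_iff; unfold in_board in *; lia].
    + intros [[a b] [E Hab]]. apply in_board_iff in Hab.
      unfold rot_hole, rot in E; simpl in E. apply pair_equal_spec in E as [<- <-].
      apply in_board_iff. unfold in_board in *. lia.
Qed.

Lemma color_rot n x y :
  color (fst (rot n x y)) (snd (rot n x y)) = (color x y + (n - 1)) mod 3.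
Proof. unfold color, rot; simpl. Z.to_euclidean_division_equations; lia. Qed.

Lemma rot_sym_pegs_of_color n P k : rot_sym n P -> 0 <= k < 3 ->
  pegs_of_color n P ((k + (n - 1)) mod 3) = pegs_of_color n P k.
Proof.
  intros Hsym Hk. unfold pegs_of_color.
  rewrite (zsum_perm _ _ _ (board_rot_perm n)), zsum_map.
  apply zsum_ext. intros [x y] Hxy. apply in_board_iff in Hxy.
  pose proof (Hsym x y Hxy) as Hpeg; pose proof (color_rot n x y) as Hcolor.
  unfold peg_of_color, rot_hole, rot in *; simpl in *. rewrite Hpeg, Hcolor.
  f_equal. f_equal. unfold color.
  destruct (Z.eqb_spec ((x + y) mod 3) k),
    (Z.eqb_spec (((x + y) mod 3 + (n - 1)) mod 3) ((k + (n - 1)) mod 3));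
    try reflexivity; exfalso; Z.to_euclidean_division_equations; lia.
Qed.

Lemma mod3_shift_invariant_const (f : Z -> Z) (s : Z) : s mod 3 <> 0 ->
  (forall k, 0 <= k < 3 -> f ((k + s) mod 3) = f k) ->
  forall i j, 0 <= i < 3 -> 0 <= j < 3 -> f i = f j.
Proof.
  intros Hs Hf.
  assert (Hs' : s mod 3 = 1 \/ s mod 3 = 2) by (Z.to_euclidean_division_equations; lia).
  pose proof (Hf 0 ltac:(lia)) as F0; pose proof (Hf 1 ltac:(lia)) as F1;
  pose proof (Hf 2 ltac:(lia)) as F2.
  rewrite <- !(Zplus_mod_idemp_r s) in F0, F1, F2.
  assert (Hall : f 0 = f 1 /\ f 1 = f 2)
    by (destruct Hs' as [Hs'|Hs']; rewrite Hs' in F0, F1, F2; compute in F0, F1, F2; lia).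
  intros i j Hi Hj.
  assert (Hi' : i = 0 \/ i = 1 \/ i = 2) by lia.
  assert (Hj' : j = 0 \/ j = 1 \/ j = 2) by lia.
  destruct Hi' as [->|[->| ->]], Hj' as [->|[->| ->]]; lia.
Qed.

Lemma rot_sym_pegs_of_color_const n P i j : n mod 3 <> 1 -> rot_sym n P ->
  0 <= i < 3 -> 0 <= j < 3 -> pegs_of_color n P i = pegs_of_color n P j.
Proof.
  intros Hn Hsym. apply (mod3_shift_invariant_const _ (n - 1)).
  - Z.to_euclidean_division_equations; lia.
  - intros k Hk. apply rot_sym_pegs_of_color; assumption.
Qed.

Theorem theorem2p3 (n : Z) (P0 : position) (Ps : list position) :
  1 <= n -> n mod 3 <> 1 ->
  jump_seq n P0 Ps ->
  one_peg n (final_pos P0 Ps) ->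
  forall P, In P (P0 :: Ps) -> ~ rot_sym n P.
Proof.
  intros _ Hn Hseq Hone P HP Hsym.
  destruct (one_peg_pegs_of_color n _ Hone) as [c [Hc Hfinal]].
  set (j := (c + 1) mod 3).
  assert (Hj : 0 <= j < 3) by (apply Z.mod_pos_bound; lia).
  assert (Hcj : (c =? j) = false)
    by (apply Z.eqb_neq; unfold j; Z.to_euclidean_division_equations; lia).
  pose proof (jump_seq_xorb_odd_pegs_of_color n P0 Ps c j Hc Hj Hseq P HP) as Hparity.
  rewrite (rot_sym_pegs_of_color_const n P c j Hn Hsym Hc Hj), xorb_nilpotent,
    !Hfinal, Z.eqb_refl, Hcj in Hparity.
  discriminate.
Qed.
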